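(* Let $\mathbb J$ be strict with quotient-initial core. Then for every global point $i:\flat\mathbb I$, the inclusion $(\varepsilon(i)=1)_\bot\hookrightarrow\mathbb I/\varepsilon(i)$ is an equivalence. That is, $\prod_{i:\flat\mathbb I}\mathsf{isEquiv}\big((\varepsilon(i)=1)_\bot\hookrightarrow\mathbb I/\varepsilon(i)\big)$ holds.
   Context: Work in univalent foundations extended by a modality $\flat$ (single mode, à la Gratzer's multimodal type theory) with a counit $\varepsilon\colon\flat A\to A$. We think of $\flat A$ as the global points of $A$. Let $\mathbb J$ be a bounded distributive lattice with underlying set $\mathbb I$ and order $i\le j$ iff $i\wedge j=i$. $\mathbb J$ is strict if $\neg(0=1)$. $\mathbb J$ has quotient-initial core if the canonical map $\mathbf 2\to\flat\mathbb I$ picking out the global points $0$ and $1$ is surjective. For a proposition $P$, put $P_\bot:=\sum_{k:\mathbb I}(k=0)*P\simeq\{k:\mathbb I\mid(k=0)\vee P\}$, where $*$ is the join. Put $\mathbb I/j:=\{k:\mathbb I\mid k\le j\}$. The inclusion $(j=1)_\bot\hookrightarrow\mathbb I/j$ is the evident one, since $(k=0)\vee(j=1)$ implies $k\le j$. *)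

From HB Require Import structures.
From mathcomp Require Import all_boot all_order.
Set Implicit Arguments. Unset Strict Implicit. Unset Printing Implicit Defensive.
Import Order.TTheory.
Local Open Scope order_scope.

Definition lleq d (L : tbDistrLatticeType d) (i j : L) : Prop := i `&` j = i.

(* P_bot := { k : I | (k = 0) \/ P }  (join of propositions = disjunction). *)
Definition Pbot d (L : tbDistrLatticeType d) (P : Prop) : Type :=
  { k : L | k = \bot \/ P }.

Definition slice d (L : tbDistrLatticeType d) (j : L) : Type :=
  { k : L | lleq k j }.

Lemma Pbot_to_slice_proof d (L : tbDistrLatticeType d) (j k : L) :
  k = \bot \/ j = \top -> lleq k j.
Proof.
rewrite /lleq; case=> ->; [exact: meet0x | exact: meetx1].
Qed.

Definition incl d (L : tbDistrLatticeType d) (j : L) :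
  Pbot L (j = \top) -> slice j :=
  fun x => exist _ (proj1_sig x) (Pbot_to_slice_proof (proj2_sig x)).

(* Equivalence of types: bi-invertible map (types here are sets). *)
Definition isEquiv (A B : Type) (f : A -> B) : Prop := bijective f.

(* The canonical map 2 -> flat I picking out the global points 0 and 1. *)
Definition canon2 (F : Type) (g0 g1 : F) (b : bool) : F := if b then g1 else g0.

From mathcomp Require Import all_boot all_order.
From Stdlib Require Import ProofIrrelevance.
Set Implicit Arguments. Unset Strict Implicit. Unset Printing Implicit Defensive.
Import Order.TTheory.
Local Open Scope order_scope.

(* Since the core is quotient-initial, every global point of I is 0 or 1.
   For j = 1 both (j = 1)_bot and I/j are all of I, and for j = 0 both are
   {0}; so the inclusion is an equivalence at every global point. *)

Lemma lleq_bot_or_top d (L : tbDistrLatticeType d) (j k : L) :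
  j = \bot \/ j = \top -> lleq k j -> k = \bot \/ j = \top.
Proof. by case=> ->; [rewrite /lleq meetx0 => <-; left | right]. Qed.

Lemma incl_bijective d (L : tbDistrLatticeType d) (j : L) :
  j = \bot \/ j = \top -> isEquiv (@incl d L j).
Proof.
move=> j01.
exists (fun s : slice j => exist _ (proj1_sig s) (lleq_bot_or_top j01 (proj2_sig s))).
  by case=> k pk; apply: ProofIrrelevanceTheory.subset_eq_compat.
by case=> k pk; apply: ProofIrrelevanceTheory.subset_eq_compat.
Qed.

Lemma canon2_image (F A : Type) (f : F -> A) (g0 g1 : F) (i : F) :
  (exists b : bool, canon2 g0 g1 b = i) -> f i = f g0 \/ f i = f g1.
Proof. by case=> [[] <-]; [right | left]. Qed.

Theorem mainTheorem19 (d : Order.disp_t) (L : tbDistrLatticeType d)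
  (flat : Type -> Type) (eps : forall A : Type, flat A -> A)
  (g0 g1 : flat L) (eps_g0 : eps L g0 = \bot) (eps_g1 : eps L g1 = \top)
  (strict : ~ (\bot = \top :> L))
  (qic : forall x : flat L, exists b : bool, canon2 g0 g1 b = x) :
  forall i : flat L, isEquiv (@incl d L (eps L i)).
Proof.
move=> i; apply: incl_bijective.
by rewrite -eps_g0 -eps_g1; apply: canon2_image.
Qed.
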